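(* Let $k\ge2$, $n>2^k$, $c=2^k-2$, and assume $d=\gcd(c,n-1)>1$; let $w=(n-1)/d$ and let $y_v=0$ if $v$ is a multiple of $d$ and $y_v=\frac{1}{w(d-1)}$ otherwise, for $v\in\{0,\dots,n-1\}$. For any two disjoint intervals $[u\oplus\ell]_{n-1}$ and $[v\oplus s]_{n-1}$ (with $u,v$ nonnegative integers and $\ell,s$ nonnegative integers), $$y([u\oplus\ell]_{n-1})+y([v\oplus s]_{n-1})\le y([u\oplus(\ell+s+1)]_{n-1}).$$
   Context: For integers $u,\ell$ and $r\ge1$, $[u\oplus\ell]_r=\{w\bmod r: u\le w\le u+\ell-1\}$. For $S\subseteq\{0,\dots,n-1\}$, $y(S)=\sum_{v\in S}y_v$. *)

From mathcomp Require Import all_boot all_order all_algebra.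
Unset Printing Implicit Defensive.
Import Order.TTheory GRing.Theory Num.Theory.
Local Open Scope ring_scope.

(* [u (+) l]_r = { w mod r : u <= w <= u + l - 1 }, viewed as a subset of
   {0,...,n-1} = 'I_n (here r = n - 1 < n, so all residues lie in 'I_n). *)
Definition cint (n r u l : nat) : {set 'I_n} :=
  [set i : 'I_n | has (fun w => (w %% r)%N == nat_of_ord i) (iota u l)].

Definition dd (n k : nat) : nat := gcdn (2 ^ k - 2) (n - 1).
Definition ww (n k : nat) : nat := ((n - 1) %/ dd n k)%N.

Definition yv (R : realFieldType) (n k v : nat) : R :=
  if (dd n k %| v)%N then 0 else 1 / ((ww n k)%:R * (dd n k - 1)%:R).

Definition ysum (R : realFieldType) (n k : nat) (S : {set 'I_n}) : R :=
  \sum_(v in S) yv R n k v.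

From mathcomp Require Import all_boot all_order all_algebra.
From mathcomp Require Import zify.

Set Implicit Arguments.
Unset Strict Implicit.
Import Order.TTheory GRing.Theory Num.Theory.

(* Since d divides m = n - 1, the weight y_(x mod m) only depends on whether
   d divides x.  Hence an interval of length l <= m has weight c times the
   number of non-multiples of d among l consecutive integers, with
   c = 1/(w(d-1)).  Any s consecutive integers contain at most s - s/d such
   non-multiples, and any s + 1 consecutive integers at least as many; so when
   l + s + 1 < m the second interval is dominated by the last s + 1 points of
   [u (+) (l+s+1)].  When l + s + 1 >= m that interval is all of Z/mZ and
   contains both disjoint intervals. *)

Section Windows.
Variable d : nat.
Hypothesis d_gt0 : (0 < d)%N.

Lemma count_dvdn_iota a L :
  (count (dvdn d) (iota a L) + (a + d.-1) %/ d)%N = ((a + L + d.-1) %/ d)%N.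
Proof.
elim: L => [|L IHL]; first by rewrite addn0.
rewrite -addn1 iotaD count_cat addnAC {}IHL /= addn0.
have -> : (a + (L + 1) + d.-1 = (a + L + d.-1).+1)%N by lia.
rewrite divnS // addnC; congr (_ + _)%N.
by rewrite -addnS prednK // (dvdn_addl (a + L) (dvdnn d)).
Qed.

Lemma divnD_bounds x L :
  (x %/ d + L %/ d <= (x + L) %/ d <= x %/ d + (L + d.-1) %/ d)%N.
Proof.
rewrite [in X in (_ <= X <= _)](divn_eq x d) -addnA divnMDl // !leq_add2l.
rewrite leq_div2r ?leq_addl //= addnC leq_div2r // leq_add2l.
by rewrite -ltnS prednK // ltn_pmod.
Qed.

Lemma count_dvdn_iota_bounds a L :
  (L %/ d <= count (dvdn d) (iota a L) <= (L + d.-1) %/ d)%N.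
Proof.
have := count_dvdn_iota a L; rewrite addnAC.
have /andP[lo hi] := divnD_bounds (a + d.-1) L.
lia.
Qed.

Lemma count_ndvdn_iota_leS a b s :
  (count (predC (dvdn d)) (iota a s) <= count (predC (dvdn d)) (iota b s.+1))%N.
Proof.
have := count_predC (dvdn d) (iota a s); have := count_predC (dvdn d) (iota b s.+1).
rewrite !size_iota.
have /andP[lo _] := count_dvdn_iota_bounds a s.
have /andP[_ hi] := count_dvdn_iota_bounds b s.+1.
rewrite addSn -addnS prednK // divnDr ?dvdnn // divnn d_gt0 in hi.
lia.
Qed.

End Windows.

Section CyclicIntervals.
Variables n r : nat.
Hypotheses (r_gt0 : (0 < r)%N) (r_le_n : (r <= n)%N).

Definition residue w : 'I_n := Ordinal (leq_trans (ltn_pmod w r_gt0) r_le_n).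

Lemma cintS u l : cint n r u l.+1 = residue (u + l) |: cint n r u l.
Proof.
apply/setP => i; rewrite !inE -addn1 iotaD has_cat /= orbF orbC.
by congr (_ || _); rewrite eq_sym.
Qed.

Lemma residue_notin_cint u l : (l < r)%N -> residue (u + l) \notin cint n r u l.
Proof.
move=> lt_lr; rewrite inE; apply/hasP => -[w]; rewrite mem_iota => /andP[le_uw lt_w] /eqP.
move=> /esym /eqP; rewrite eqn_mod_dvd; last by lia.
by move/dvdn_leq; lia.
Qed.

Lemma residue_in_cint_full u w : residue w \in cint n r u r.
Proof.
rewrite inE; apply/hasP; exists (u + (w %% r + (r - u %% r)) %% r)%N.
  by rewrite mem_iota leq_addr ltn_add2l ltn_pmod.
apply/eqP; rewrite /= modnDmr {1}(divn_eq u r) -addnA modnMDl.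
have -> : (u %% r + (w %% r + (r - u %% r)) = w %% r + r)%N.
  by have := ltn_pmod u r_gt0; lia.
by rewrite modnDr modn_mod.
Qed.

Lemma cint_sub_full u v l : cint n r v l \subset cint n r u r.
Proof.
apply/subsetP => i; rewrite inE => /hasP[w _ /eqP w_i].
have -> : i = residue w by apply: val_inj.
exact: residue_in_cint_full.
Qed.

Lemma cint_full_sub u l : (r <= l)%N -> cint n r u r \subset cint n r u l.
Proof.
by move=> le_rl; apply/subsetP => i; rewrite !inE -(subnKC le_rl) iotaD has_cat => ->.
Qed.

End CyclicIntervals.

Local Open Scope ring_scope.

Section Weights.
Variables (R : realFieldType) (n k : nat).
Let m := (n - 1)%N.
Let d := dd n k.
Let c : R := 1 / ((ww n k)%:R * (d - 1)%:R).
Hypothesis m_gt0 : (0 < m)%N.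

Let m_le_n : (m <= n)%N. Proof. by rewrite /m leq_subr. Qed.

Lemma c_ge0 : 0 <= c.
Proof. by rewrite divr_ge0 // mulr_ge0. Qed.

Lemma yv_ge0 v : 0 <= yv R n k v.
Proof. by rewrite /yv; case: ifP => // _; apply: c_ge0. Qed.

Lemma yv_mod w : yv R n k (w %% m) = if (d %| w)%N then 0 else c.
Proof. by rewrite /yv /dvdn modn_dvdm // dvdn_gcdr. Qed.

Lemma ysum_subset (A B : {set 'I_n}) : A \subset B -> ysum R n k A <= ysum R n k B.
Proof.
move=> sAB; rewrite /ysum [leRHS](big_setID A) /= (setIidPr sAB) lerDl.
by apply: sumr_ge0 => i _; apply: yv_ge0.
Qed.

Lemma ysumU (A B : {set 'I_n}) :
  [disjoint A & B] -> ysum R n k (A :|: B) = ysum R n k A + ysum R n k B.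
Proof. by move=> dAB; rewrite /ysum -bigU //; apply: eq_bigl => i; rewrite !inE. Qed.

Lemma ysum_cint u l :
  (l <= m)%N -> ysum R n k (cint n m u l) = c *+ count (predC (dvdn d)) (iota u l).
Proof.
elim: l => [|l IHl] le_lm.
  by rewrite /ysum (_ : cint _ _ _ _ = set0) ?big_set0 //; apply/setP => i; rewrite !inE.
rewrite (cintS m_gt0 m_le_n) /ysum big_setU1 ?residue_notin_cint // -/(ysum _ _ _ _).
rewrite IHl 1?ltnW // -addn1 iotaD count_cat /= addn0 mulrnDr addrC yv_mod.
by case: (d %| u + l)%N.
Qed.

End Weights.

Theorem lemma3p3 (R : realFieldType) (k n : nat) :
  (2 <= k)%N -> (2 ^ k < n)%N -> (1 < gcdn (2 ^ k - 2) (n - 1))%N ->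
  forall u l v s : nat,
    [disjoint cint n (n - 1) u l & cint n (n - 1) v s] ->
    ysum R n k (cint n (n - 1) u l) + ysum R n k (cint n (n - 1) v s)
      <= ysum R n k (cint n (n - 1) u (l + s + 1)).
Proof.
move=> k_ge2 lt_2k_n _ u l v s disj.
have m_gt0 : (0 < n - 1)%N by have := leq_pexp2l (isT : 0 < 2)%N k_ge2; lia.
have m_le_n : (n - 1 <= n)%N by rewrite leq_subr.
have [le_m_len | lt_len_m] := leqP (n - 1) (l + s + 1).
  rewrite -ysumU //; apply: (le_trans _ (ysum_subset R k (cint_full_sub n u le_m_len))).
  by apply: ysum_subset; rewrite subUset !(cint_sub_full m_gt0 m_le_n).
have [le_l_m le_s_m] : (l <= n - 1)%N /\ (s <= n - 1)%N by lia.
rewrite !ysum_cint ?(ltnW lt_len_m) //.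
rewrite -addnA addn1 iotaD count_cat -mulrnDr ler_wpMn2l ?c_ge0 // leq_add2l.
by apply: count_ndvdn_iota_leS; rewrite /dd gcdn_gt0 m_gt0 orbT.
Qed.
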